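(* There exists an absolute constant $C$ such that the following holds. Let $\lambda_1\ge\lambda_2\ge\dots\ge\lambda_d>0$, and for $t\in\mathbb R^d$ let $\|t\|_{SLOPE}=\sum_{j=1}^d\lambda_jt_j^*$, where $t_1^*\ge\dots\ge t_d^*\ge0$ is the non-increasing rearrangement of $(|t_i|)_{i=1}^d$. Let $\mathcal B=\{t\in\mathbb R^d:\|t\|_{SLOPE}\le1\}$ and $M=\max_{1\le j\le d}\lambda_j^{-1}\sqrt{\log(ed/j)}$. Then $\ell^*(\mathcal B)\le CM$.
   Context: $\ell^*(\mathcal B)=\mathbb E\sup_{t\in\mathcal B}\langle G,t\rangle$ with $G$ a standard Gaussian vector in $\mathbb R^d$. *)

From HB Require Import structures.
From mathcomp Require Import all_boot all_order all_algebra.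
From mathcomp Require Import all_classical all_reals all_analysis.
From mathcomp Require Import Rstruct Rstruct_topology.
Set Implicit Arguments. Unset Strict Implicit. Unset Printing Implicit Defensive.
Import Order.TTheory GRing.Theory Num.Theory.
Local Open Scope classical_set_scope.
Local Open Scope ring_scope.

(* Non-increasing rearrangement t^*_1 >= ... >= t^*_d of (|t_i|)_i,
   as a sequence of length d (0-indexed: index j stands for t^*_(j+1)). *)
Definition decr_rearr (R : realType) (d : nat) (t : 'I_d -> R) : seq R :=
  sort (fun x y : R => y <= x) [seq `|t i| | i <- enum 'I_d].

Definition slope_norm (R : realType) (d : nat) (lambda t : 'I_d -> R) : R :=
  \sum_(j < d) lambda j * nth 0 (decr_rearr t) j.

Definition slope_ball (R : realType) (d : nat) (lambda : 'I_d -> R)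
  : set ('I_d -> R) := [set t | slope_norm lambda t <= 1].

(* M = max_{1<=j<=d} lambda_j^{-1} sqrt(log(e d / j)); index j : 'I_d stands for j+1 *)
Definition slope_M (R : realType) (d : nat) (lambda : 'I_d -> R) : R :=
  \big[Num.max/0]_(j < d)
     ((lambda j)^-1 * Num.sqrt (ln (expR 1 * d%:R / (j.+1)%:R))).

Definition std_gaussian_vector (R : realType) (dT : measure_display)
  (T : measurableType dT) (P : probability T R) (d : nat) (G : 'I_d -> T -> R) : Prop :=
  (forall i, measurable_fun setT (G i)) /\
  (forall i (A : set R), measurable A ->
      P (G i @^-1` A) = normal_prob 0 1 A) /\
  (forall A : 'I_d -> set R, (forall i, measurable (A i)) ->
      P (\bigcap_i (G i @^-1` A i)) = (\prod_(i < d) P (G i @^-1` A i))%E).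

Definition gauss_mean_width (R : realType) (dT : measure_display)
  (T : measurableType dT) (P : probability T R) (d : nat) (G : 'I_d -> T -> R)
  (B : set ('I_d -> R)) : \bar R :=
  (\int[P]_x ereal_sup [set (\sum_(i < d) G i x * t i)%:E | t in B])%E.

From HB Require Import structures.
From mathcomp Require Import all_boot all_order all_algebra.
From mathcomp Require Import all_classical all_reals all_analysis.
From mathcomp Require Import Rstruct Rstruct_topology.
From mathcomp Require Import measurable_realfun.
From mathcomp Require Import perm ring lra.
Set Implicit Arguments. Unset Strict Implicit. Unset Printing Implicit Defensive.
Import Order.TTheory GRing.Theory Num.Theory.
Local Open Scope classical_set_scope.
Local Open Scope ring_scope.

(* Write t^*_j for the rearrangement of t in the SLOPE ball, so that
   (j+1) lambda_j t^*_j <= ||t||_SLOPE <= 1, and pair each coordinate i with the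
   rank j of |t_i|.  If |g_i| <= 2 M lambda_j, then |g_i| t^*_j <= 2 M lambda_j t^*_j,
   and these terms add up to at most 2 M ||t||_SLOPE <= 2 M.  Otherwise
   g_i^2 / 4 > (M lambda_j)^2 >= log (e d / (j+1)), so d / (j+1) <= exp (g_i^2 / 4),
   and with |g_i| <= 2 exp (g_i^2 / 8) and t^*_j <= 1 / ((j+1) lambda_j) this gives
   |g_i| t^*_j <= (2 M / d) exp (3 g_i^2 / 8).  Hence, pointwise,
   sup_{t in B} <G, t> <= 2 M + (2 M / d) sum_i exp (3 G_i^2 / 8),
   and E exp (3 G_i^2 / 8) = 2 for G_i ~ N(0, 1), so that ell^*(B) <= 6 M. *)

Section decr_rearr.
Context {R : realType} (d : nat) (t : 'I_d -> R).
Local Notation s := (decr_rearr t).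

Lemma size_decr_rearr : size s = d.
Proof. by rewrite size_sort size_map size_enum_ord. Qed.

Lemma perm_decr_rearr : perm_eq s [seq `|t i| | i <- enum 'I_d].
Proof. by rewrite /decr_rearr perm_sort. Qed.

Lemma decr_rearr_ge0 k : 0 <= nth 0 s k.
Proof.
have [klt|kge] := ltnP k (size s); last by rewrite nth_default.
by move: (mem_nth 0 klt); rewrite (perm_mem perm_decr_rearr) => /mapP[i _ ->].
Qed.

Lemma decr_rearr_nonincr j k : (j <= k)%N -> nth 0 s k <= nth 0 s j.
Proof.
move=> jk; have [kd|dk] := ltnP k d; last first.
  by rewrite [nth _ _ k]nth_default ?size_decr_rearr// decr_rearr_ge0.
have sorted_s : sorted (fun x y : R => y <= x) s.
  by apply: sort_sorted => x y; rewrite orbC le_total.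
apply: (sorted_leq_nth _ _ 0 sorted_s) => //; rewrite ?inE ?size_decr_rearr//.
- by move=> ? ? ? h1 h2; exact: le_trans h2 h1.
- exact: leq_ltn_trans kd.
Qed.

Lemma decr_rearr_nth_perm : exists p : 'S_d, forall k : 'I_d, nth 0 s k = `|t (p k)|.
Proof.
have /tuple_permP[p sE] : perm_eq s [tuple (`|t i|) | i < d].
  by rewrite perm_decr_rearr.
by exists p => k; rewrite sE -tnth_nth !tnth_mktuple.
Qed.

Lemma slope_norm_ge_rank_term (lambda : 'I_d -> R) :
  (forall i j : 'I_d, (i <= j)%N -> lambda j <= lambda i) ->
  (forall i, 0 <= lambda i) ->
  forall j : 'I_d, j.+1%:R * lambda j * nth 0 s j <= slope_norm lambda t.
Proof.
move=> lambda_nonincr lambda_ge0 j.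
rewrite /slope_norm (bigID (fun k : 'I_d => (k < j.+1)%N)) /=.
apply: ler_wpDr; first by apply: sumr_ge0 => k _; rewrite mulr_ge0 ?decr_rearr_ge0.
have -> : j.+1%:R * lambda j * nth 0 s j = \sum_(k < j.+1) lambda j * nth 0 s j.
  by rewrite sumr_const card_ord -mulrA mulr_natl.
rewrite (big_ord_narrow (ltn_ord j)); apply: ler_sum => k _.
have kj : (widen_ord (ltn_ord j) k <= j)%N := ltn_ord k.
by rewrite ler_pM ?decr_rearr_ge0 ?lambda_nonincr ?decr_rearr_nonincr.
Qed.

End decr_rearr.

Lemma slope_norm0 (R : realType) (d : nat) (lambda : 'I_d -> R) :
  slope_norm lambda (fun _ => 0) = 0.
Proof.
have [p sE] := decr_rearr_nth_perm (fun _ : 'I_d => 0 : R).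
by rewrite /slope_norm big1// => k _; rewrite sE normr0 mulr0.
Qed.

Section rank_term.
Context {R : realType}.

Lemma ler_2expR_sqr8 (x : R) : x <= 2 * expR (x ^+ 2 / 8).
Proof. by have := expR_ge1Dx (x ^+ 2 / 8); have := sqr_ge0 (x - 2); nra. Qed.

Lemma rank_term_le (x s l j N M : R) :
  0 <= x -> 0 <= s -> 0 < l -> 0 < j <= N -> j * l * s <= 1 ->
  Num.sqrt (ln (expR 1 * N / j)) <= M * l ->
  x * s <= 2 * M * (l * s) + 2 * M / N * expR (3 / 8 * x ^+ 2).
Proof.
move=> x0 s0 l0 /andP[j0 jN] jls1 hM.
have N0 : 0 < N := lt_le_trans j0 jN.
set L := ln (expR 1 * N / j).
have L1 : 1 <= L.
  rewrite -[leLHS]expRK ler_ln ?posrE ?expR_gt0 ?mulr_gt0 ?invr_gt0//.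
  by rewrite -mulrA ler_peMr ?expR_ge0// ler_pdivlMr// mul1r.
have L0 : 0 <= L := le_trans ler01 L1.
have M1 : 1 <= M * l by apply: le_trans hM; rewrite -[leLHS]sqrtr1 ler_sqrt.
have LM : L <= (M * l) ^+ 2.
  rewrite -(sqr_sqrtr L0) ler_pXn2r ?nnegrE ?sqrtr_ge0//.
  exact: le_trans M1.
have M0 : 0 <= M by rewrite -(pmulr_lge0 _ l0) (le_trans ler01 M1).
have [x_small|x_large] := leP x (2 * (M * l)).
  apply: ler_wpDr; first by rewrite !mulr_ge0 ?expR_ge0 ?invr_ge0 ?(ltW N0).
  by rewrite !mulrA ler_wpM2r// -mulrA.
apply: ler_wpDl; first by rewrite !mulr_ge0 ?(ltW l0).
have eNj : expR 1 * N / j <= expR (x ^+ 2 / 4).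
  rewrite -[leLHS]lnK ?posrE ?mulr_gt0 ?expR_gt0 ?invr_gt0// ler_expR.
  by apply: le_trans LM _; nra.
have NjE4 : N <= j * expR (x ^+ 2 / 4).
  rewrite -ler_pdivrMl// mulrC; apply: le_trans eNj.
  by rewrite -mulrA ler_peMl ?divr_ge0 ?(ltW N0) ?(ltW j0) ?(ltW (pexpR_gt1 ltr01)).
have jsM : j * s <= M by nra.
have -> : expR (3 / 8 * x ^+ 2) = expR (x ^+ 2 / 8) * expR (x ^+ 2 / 4).
  by rewrite -exp.expRD; congr expR; lra.
rewrite mulrAC ler_pdivlMr//.
set E8 := expR (x ^+ 2 / 8); set E4 := expR (x ^+ 2 / 4).
apply: (@le_trans _ _ (2 * E8 * s * (j * E4))).
  by rewrite ler_pM ?mulr_ge0 ?(ltW N0) ?ler_wpM2r ?ler_2expR_sqr8.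
have E0 : 0 <= E8 * E4 by rewrite mulr_ge0 ?expR_ge0.
by have := ler_wpM2l E0 jsM; nra.
Qed.

End rank_term.

Section slope_dual.
Context {R : realType} (d : nat) (lambda : 'I_d -> R).
Hypothesis lambda_nonincr : forall i j : 'I_d, (i <= j)%N -> lambda j <= lambda i.
Hypothesis lambda_gt0 : forall i, 0 < lambda i.
Local Notation M := (slope_M lambda).

Lemma slope_M_ge0 : 0 <= M.
Proof. exact: bigmax_ge_id. Qed.

Lemma sqrt_ln_le_slope_M (j : 'I_d) :
  Num.sqrt (ln (expR 1 * d%:R / j.+1%:R)) <= M * lambda j.
Proof.
rewrite [leRHS]mulrC -(@ler_pdivrMl _ (lambda j))//.
exact: (le_bigmax _ (fun j : 'I_d => (lambda j)^-1 * _) j).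
Qed.

Lemma inner_le_slope_M_expR (g t : 'I_d -> R) : slope_norm lambda t <= 1 ->
  \sum_i g i * t i <= 2 * M + 2 * M / d%:R * \sum_i expR (3 / 8 * g i ^+ 2).
Proof.
move=> t_ball; have [p sE] := decr_rearr_nth_perm t.
set s := decr_rearr t; set c := 2 * M / d%:R.
have term (k : 'I_d) : `|g (p k)| * nth 0 s k <=
    2 * M * (lambda k * nth 0 s k) + c * expR (3 / 8 * g (p k) ^+ 2).
  rewrite -(real_normK (num_real (g (p k)))).
  apply: (rank_term_le (j := k.+1%:R)).
  all: rewrite ?normr_ge0 ?decr_rearr_ge0 ?sqrt_ln_le_slope_M//.
  - by rewrite ltr0Sn ler_nat ltn_ord.
  - apply: le_trans t_ball; apply: slope_norm_ge_rank_term => // i.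
    exact: ltW.
apply: (@le_trans _ _ (\sum_k `|g (p k)| * nth 0 s k)).
  rewrite (reindex_inj (@perm_inj _ p)) /=; apply: ler_sum => k _.
  by rewrite sE -normrM ler_norm.
apply: le_trans (ler_sum _ (fun k _ => term k)) _.
rewrite big_split /= -!mulr_sumr [X in _ <= _ + c * X](reindex_inj (@perm_inj _ p)).
by rewrite lerD2r -[leRHS]mulr1 ler_wpM2l ?mulr_ge0 ?slope_M_ge0.
Qed.

End slope_dual.

Section integral_complements.
Local Open Scope ereal_scope.

(* Unlike [ge0_le_integral], this needs no measurability: a nonnegative
   integral is the supremum of the integrals of its simple minorants. *)
Lemma ge0_le_integralT dT (T : measurableType dT) (R : realType)
    (mu : {measure set T -> \bar R}) (f g : T -> \bar R) :
  (forall x, 0 <= f x) -> (forall x, f x <= g x) ->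
  \int[mu]_x f x <= \int[mu]_x g x.
Proof.
move=> f0 fg; have g0 x : 0 <= g x := le_trans (f0 x) (fg x).
rewrite !ge0_integralTE//; apply: ereal_sup_le => _ [h hf <-].
by exists h => //= x; exact: le_trans (hf x) (fg x).
Qed.

Lemma ge0_integral_normal_prob (R : realType) (m s : R) (f : R -> \bar R) :
  (forall x, 0 <= f x) -> measurable_fun [set: R] f ->
  \int[normal_prob m s]_x f (x : R) =
  \int[lebesgue_measure]_x (f x * (normal_pdf m s x)%:E).
Proof.
move=> f0 mf; have numu := @normal_prob_dominates R m s.
rewrite -(Radon_Nikodym_SigmaFinite.change_of_variables numu f0 measurableT mf).
have mpdf : measurable_fun [set: R] (fun x => (normal_pdf m s x)%:E).
  by apply/measurable_EFinP; exact: measurable_normal_pdf.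
have mRN := measurable_int _ (Radon_Nikodym_SigmaFinite.f_integrable numu).
have RN_pdf : ae_eq lebesgue_measure [set: R]
    (Radon_Nikodym_SigmaFinite.f (normal_prob m s) lebesgue_measure)
    (fun x => (normal_pdf m s x)%:E).
  apply: integral_ae_eq => //; first exact: Radon_Nikodym_SigmaFinite.f_integrable.
  by move=> E _ mE; rewrite -Radon_Nikodym_SigmaFinite.f_integral.
apply: ge0_ae_eq_integral => //.
- exact: emeasurable_funM.
- exact: emeasurable_funM.
- by move=> x _; rewrite mule_ge0 ?Radon_Nikodym_SigmaFinite.f_ge0.
- by move=> x _; rewrite mule_ge0 ?lee_fin ?normal_pdf_ge0.
- exact: ae_eqe_mul2l.
Qed.

End integral_complements.

Section normal_moment.
Context {R : realType}.

Lemma normal_peak1 : normal_peak (1 : R) = 2 * normal_peak 2.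
Proof.
rewrite /normal_peak expr1n mul1r -mulrnAr sqrtrM ?exprn_ge0// sqrtr_sqr.
by rewrite ger0_norm// invfM mulrA divff ?mul1r ?pnatr_eq0.
Qed.

Local Open Scope ereal_scope.

Lemma measurable_expR_sqr38 : measurable_fun [set: R] (fun x => (expR (3 / 8 * x ^+ 2))%:E).
Proof.
apply/measurable_EFinP; apply: measurableT_comp => //.
by apply: measurable_funM => //; exact: measurable_funX.
Qed.

Lemma normal_expR_moment :
  \int[normal_prob 0 1]_x (expR (3 / 8 * x ^+ 2))%:E = (2 : R)%:E.
Proof.
rewrite (@ge0_integral_normal_prob R 0 1 (fun x => (expR (3 / 8 * x ^+ 2))%:E))//;
  last exact: measurable_expR_sqr38.
transitivity (\int[lebesgue_measure]_x ((2 : R)%:E * (normal_pdf 0 2 x)%:E)).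
  apply: eq_integral => y _; rewrite -!EFinM; congr EFin.
  rewrite !normal_pdfE ?oner_neq0 ?pnatr_eq0// /normal_fun normal_peak1.
  rewrite mulrCA -exp.expRD mulrA [RHS]mulrA subr0.
  by congr (_ * expR _)%R; field.
rewrite ge0_integralZl//; first by rewrite integral_normal_pdf mule1.
- by apply/measurable_EFinP; exact: measurable_normal_pdf.
- by move=> y _; rewrite lee_fin normal_pdf_ge0.
Qed.

Lemma normal_law_expR_moment dT (T : measurableType dT) (P : probability T R)
    (X : T -> R) :
  measurable_fun setT X ->
  (forall A, measurable A -> P (X @^-1` A) = normal_prob 0 1 A) ->
  \int[P]_x (expR (3 / 8 * X x ^+ 2))%:E = 2%:E.
Proof.
move=> mX lawX; rewrite -normal_expR_moment.
(* [normal_prob] is a measure on [measurableTypeR R], not on the canonical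
   measurable structure of [R] in which [X] is measurable. *)
transitivity (\int[pushforward P (X : T -> measurableTypeR R)]_y
                (expR (3 / 8 * y ^+ 2))%:E).
  by rewrite ge0_integral_pushforward//; exact: measurable_expR_sqr38.
by apply: eq_measure_integral => A mA _; exact: lawX.
Qed.

End normal_moment.

Lemma gauss_mean_width_slope_ball_le (R : realType) (d : nat) (lambda : 'I_d -> R)
    (dT : measure_display) (T : measurableType dT) (P : probability T R)
    (G : 'I_d -> T -> R) :
  (forall i j : 'I_d, (i <= j)%N -> lambda j <= lambda i) ->
  (forall i, 0 < lambda i) ->
  (forall i, measurable_fun setT (G i)) ->
  (forall i (A : set R), measurable A -> P (G i @^-1` A) = normal_prob 0 1 A) ->
  (gauss_mean_width P G (slope_ball lambda) <= (6 * slope_M lambda)%:E)%E.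
Proof.
move=> lambda_nonincr lambda_gt0 mG lawG.
set M := slope_M lambda; set c := 2 * M / d%:R.
have M0 : 0 <= M := slope_M_ge0 lambda.
have c0 : 0 <= c by rewrite /c !mulr_ge0.
pose F i x := (expR (3 / 8 * G i x ^+ 2))%:E.
have mF i : measurable_fun setT (F i).
  exact: (measurableT_comp measurable_expR_sqr38 (mG i)).
have F0 i x : (0 <= F i x)%E by rewrite lee_fin expR_ge0.
have sup_ge0 x :
    (0 <= ereal_sup [set (\sum_i G i x * t i)%:E | t in slope_ball lambda])%E.
  apply: ereal_sup_ubound; exists (fun _ => 0).
    by rewrite /slope_ball /= slope_norm0.
  by rewrite big1// => i _; rewrite mulr0.
have sup_le x : (ereal_sup [set (\sum_i G i x * t i)%:E | t in slope_ball lambda]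
    <= (2 * M)%:E + c%:E * \sum_i F i x)%E.
  apply: ge_ereal_sup => _ [t t_ball <-].
  by rewrite /F sumEFin -EFinM -EFinD lee_fin inner_le_slope_M_expR.
apply: le_trans (ge0_le_integralT _ sup_ge0 sup_le) _.
rewrite ge0_integralD//; last 3 first.
- by move=> x _; rewrite lee_fin mulr_ge0.
- by move=> x _; rewrite mule_ge0 ?lee_fin ?sume_ge0.
- by apply: emeasurable_funM => //; exact: emeasurable_sum.
rewrite integral_cst//= probability_setT mule1 ge0_integralZl//; last 2 first.
- exact: emeasurable_sum.
- by move=> x _; rewrite sume_ge0.
rewrite ge0_integral_sum// (eq_bigr _ (fun i _ => normal_law_expR_moment (mG i) (lawG i))).
rewrite sumEFin -EFinM -EFinD lee_fin sumr_const card_ord.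
have [->|d0] := eqVneq d 0%N; first by rewrite mulr0n mulr0 addr0; lra.
have cd : c * d%:R = 2 * M by rewrite /c divfK ?pnatr_eq0.
by rewrite -[2 *+ d]mulr_natr mulrCA cd; lra.
Qed.

Theorem proposition5p11 :
  exists C : Rdefinitions.R,
  forall (d : nat) (lambda : 'I_d -> Rdefinitions.R),
    (0 < d)%N ->
    (forall i j : 'I_d, (i <= j)%N -> lambda j <= lambda i) ->
    (forall i, 0 < lambda i) ->
    forall (dT : measure_display) (T : measurableType dT)
           (P : probability T Rdefinitions.R) (G : 'I_d -> T -> Rdefinitions.R),
      std_gaussian_vector P G ->
      (gauss_mean_width P G (slope_ball lambda) <= (C * slope_M lambda)%:E)%E.
Proof.
exists 6 => d lambda _ lambda_nonincr lambda_gt0 dT T P G [mG [lawG _]].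
exact: gauss_mean_width_slope_ball_le.
Qed.
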